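(* Let $n\ge1$ be an integer and let $k\in\mathbb{R}\setminus A_n$. Then there is a unique pair $(a,b)\in\mathbb{R}^2$ with $(a,b)\neq(0,0)$ satisfying both $S^{(a,b)}_{k,n+1}-S^{(a,b)}_{k,n}=-bk+2b-a$ and $4a^3+27b^2=0$; namely $a=-\frac{27(F_n(k)+1)^2}{4(G_n(k)+k-2)^2}$, $b=\frac{27(F_n(k)+1)^3}{4(G_n(k)+k-2)^3}$.
   Context: For real $k,a,b$, the generalized $k$-FL sequence is $S^{(a,b)}_{k,0}=2b$, $S^{(a,b)}_{k,1}=bk+a$, $S^{(a,b)}_{k,m}=kS^{(a,b)}_{k,m-1}+S^{(a,b)}_{k,m-2}$ ($m\ge2$). Define $f_m,g_m\in\mathbb{Z}[T]$ by $f_0=0,f_1=1,g_0=2,g_1=T$, $f_m=Tf_{m-1}+f_{m-2}$, $g_m=Tg_{m-1}+g_{m-2}$, and set $F_n=f_{n+1}-f_n$, $G_n=g_{n+1}-g_n$, so that $S^{(a,b)}_{k,n+1}-S^{(a,b)}_{k,n}=F_n(k)a+G_n(k)b$. Let $A_n=\{k\in\mathbb{R}: F_n(k)+1=0 \text{ or } G_n(k)+k-2=0\}$. *)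

From HB Require Import structures.
From mathcomp Require Import all_boot all_order all_algebra.
From mathcomp Require Import reals.
Set Implicit Arguments. Unset Strict Implicit. Unset Printing Implicit Defensive.
Import Order.TTheory GRing.Theory Num.Theory.
Local Open Scope ring_scope.

(* pairs (f_m, f_{m+1}) and (g_m, g_{m+1}) in Z[T] *)
Fixpoint fpair (m : nat) : {poly int} * {poly int} :=
  match m with
  | 0%N => (0, 1)
  | m'.+1 => let: (x, y) := fpair m' in (y, 'X * y + x)
  end.
Fixpoint gpair (m : nat) : {poly int} * {poly int} :=
  match m with
  | 0%N => (2%:P, 'X)
  | m'.+1 => let: (x, y) := gpair m' in (y, 'X * y + x)
  end.

Definition fpol (m : nat) : {poly int} := (fpair m).1.
Definition gpol (m : nat) : {poly int} := (gpair m).1.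

Definition Fpol (n : nat) : {poly int} := fpol n.+1 - fpol n.
Definition Gpol (n : nat) : {poly int} := gpol n.+1 - gpol n.

Definition evalZ {R : realType} (p : {poly int}) (k : R) : R :=
  (map_poly (fun z : int => z%:~R) p).[k].

(* generalized k-FL sequence: pairs (S_m, S_{m+1}) *)
Fixpoint Spair {R : realType} (k a b : R) (m : nat) : R * R :=
  match m with
  | 0%N => (2 * b, b * k + a)
  | m'.+1 => let: (x, y) := Spair k a b m' in (y, k * y + x)
  end.
Definition S {R : realType} (k a b : R) (m : nat) : R := (Spair k a b m).1.

Definition A_set {R : realType} (n : nat) (k : R) : Prop :=
  evalZ (Fpol n) k + 1 = 0 \/ evalZ (Gpol n) k + k - 2 = 0.

From HB Require Import structures.
From mathcomp Require Import all_boot all_order all_algebra.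
From mathcomp Require Import reals.
From mathcomp Require Import ring.
Import Order.TTheory GRing.Theory Num.Theory.
Local Open Scope ring_scope.

(* The sequence is linear in (a, b): S_m = f_m(k) a + g_m(k) b, hence the
   difference equation reads p a + q b = 0 with p = F_n(k) + 1 and
   q = G_n(k) + k - 2, a line through the origin.  The curve
   4 a^3 + 27 b^2 = 0 is the cusp (a, b) = (-3 t^2, 2 t^3), which meets this
   line away from the origin exactly at t = 3 p / (2 q). *)

Section EvalZ.
Variable R : realType.
Implicit Types (p q : {poly int}) (k : R).

Lemma evalZD p q k : evalZ (p + q) k = evalZ p k + evalZ q k.
Proof. by rewrite /evalZ rmorphD hornerD. Qed.

Lemma evalZB p q k : evalZ (p - q) k = evalZ p k - evalZ q k.
Proof. by rewrite /evalZ rmorphB hornerD hornerN. Qed.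

Lemma evalZXM p k : evalZ ('X * p) k = k * evalZ p k.
Proof. by rewrite /evalZ rmorphM /= map_polyX hornerM hornerX mulrC. Qed.

Lemma evalZC (c : int) k : evalZ c%:P k = c%:~R.
Proof. by rewrite /evalZ map_polyC hornerC. Qed.

Lemma evalZX k : evalZ 'X k = k.
Proof. by rewrite /evalZ map_polyX hornerX. Qed.

End EvalZ.

Lemma fpairE m : fpair m = (fpol m, fpol m.+1).
Proof. by rewrite /fpol /=; case: (fpair m). Qed.

Lemma gpairE m : gpair m = (gpol m, gpol m.+1).
Proof. by rewrite /gpol /=; case: (gpair m). Qed.

Lemma fpolSS m : fpol m.+2 = 'X * fpol m.+1 + fpol m.
Proof. by rewrite {1}/fpol /= fpairE. Qed.

Lemma gpolSS m : gpol m.+2 = 'X * gpol m.+1 + gpol m.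
Proof. by rewrite {1}/gpol /= gpairE. Qed.

Section FLSequence.
Variables (R : realType) (k a b : R).

Lemma SpairE m : Spair k a b m = (S k a b m, S k a b m.+1).
Proof. by rewrite /S /=; case: (Spair k a b m). Qed.

Lemma S0 : S k a b 0 = 2 * b. Proof. by []. Qed.

Lemma S1 : S k a b 1 = b * k + a. Proof. by []. Qed.

Lemma S_SS m : S k a b m.+2 = k * S k a b m.+1 + S k a b m.
Proof. by rewrite {1}/S /= SpairE. Qed.

Lemma S_linear m : S k a b m = evalZ (fpol m) k * a + evalZ (gpol m) k * b.
Proof.
suff [] : S k a b m = evalZ (fpol m) k * a + evalZ (gpol m) k * b /\
          S k a b m.+1 = evalZ (fpol m.+1) k * a + evalZ (gpol m.+1) k * b by [].
elim: m => [|m [IHm IHm1]].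
  rewrite S0 S1 /fpol /gpol /= -(polyC0 int) -(polyC1 int) !evalZC evalZX.
  by split; ring.
split=> //; rewrite S_SS fpolSS gpolSS !evalZD !evalZXM IHm IHm1; ring.
Qed.

Lemma S_succ_sub n :
  S k a b n.+1 - S k a b n = evalZ (Fpol n) k * a + evalZ (Gpol n) k * b.
Proof. by rewrite !S_linear /Fpol /Gpol !evalZB; ring. Qed.

End FLSequence.

Lemma line_meets_cusp (R : numFieldType) (p q a b : R) : p != 0 -> q != 0 ->
  ((a, b) <> (0, 0) /\ p * a + q * b = 0 /\ 4 * a ^+ 3 + 27 * b ^+ 2 = 0) <->
  (a = - (27 * p ^+ 2) / (4 * q ^+ 2) /\ b = (27 * p ^+ 3) / (4 * q ^+ 3)).
Proof.
move=> p0 q0; have n40 : 4 != 0 :> R by rewrite pnatr_eq0.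
have n270 : 27 != 0 :> R by rewrite pnatr_eq0.
split=> [[ab0 [line cusp]] | [-> ->]]; last first.
  split; last by split; field; rewrite ?p0 ?q0.
  by case=> _; apply/eqP; rewrite !mulf_neq0 ?invr_eq0 ?mulf_neq0 ?expf_neq0.
have ea : a = - q * b / p.
  by apply: (mulIf p0); rewrite divfK //; apply/eqP; rewrite mulNr -addr_eq0 [a * p]mulrC line.
have b0 : b != 0.
  by apply/eqP => b0; apply: ab0; rewrite ea b0 mulr0 mul0r.
have eb : b = 27 * p ^+ 3 / (4 * q ^+ 3).
  have : b ^+ 2 * (27 * p ^+ 3 - 4 * q ^+ 3 * b) = 0.
    by rewrite -(mulr0 (p ^+ 3)) -cusp ea; field.
  move/eqP; rewrite mulf_eq0 expf_eq0 (negbTE b0) /= subr_eq0 => /eqP ->.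
  by field; rewrite q0.
by split=> //; rewrite ea eb; field; rewrite p0 q0.
Qed.

Theorem lemma3p5 (R : realType) (n : nat) (k : R) :
  (1 <= n)%N -> ~ A_set n k ->
  forall a b : R,
    ((a, b) <> (0, 0) /\
     S k a b n.+1 - S k a b n = - b * k + 2 * b - a /\
     4 * a ^+ 3 + 27 * b ^+ 2 = 0)
    <->
    (a = - (27 * (evalZ (Fpol n) k + 1) ^+ 2) / (4 * (evalZ (Gpol n) k + k - 2) ^+ 2) /\
     b = (27 * (evalZ (Fpol n) k + 1) ^+ 3) / (4 * (evalZ (Gpol n) k + k - 2) ^+ 3)).
Proof.
move=> _ notA a b; rewrite S_succ_sub.
have p0 : evalZ (Fpol n) k + 1 != 0 by apply/eqP => p0; apply: notA; left.
have q0 : evalZ (Gpol n) k + k - 2 != 0 by apply/eqP => q0; apply: notA; right.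
rewrite -(line_meets_cusp _ _ _ a b p0 q0).
have eq_sub0 (x y : R) : x = y <-> x - y = 0 by split=> [->|/subr0_eq]; rewrite ?subrr.
rewrite eq_sub0; split=> -[ab0 [line cusp]]; split=> //; split=> //; rewrite -line; ring.
Qed.
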